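(* Let $(A,\cdot)$ be a commutative $\mathbb{Q}$-algebra and, for each $m\in\mathbb{N}$, let $w\mapsto f_w(m)$ be a $\mathbb{Q}$-algebra homomorphism $(\mathfrak{H}^1_z,\ast)\to(A,\cdot)$. For a nonempty word $w\in\mathfrak{H}^1_z$ and $M\in\mathbb{N}$ define \[ F_w(M):=\sum_{\substack{1\le k\le l(w)\\ w_1\cdots w_k=w}}\ \sum_{0<m_1<\dots<m_k<M}f_{w_1}(m_1)\cdots f_{w_k}(m_k)\in A, \] where $l(w)$ is the length of $w$ and the inner sum is over all decompositions of $w$ as a concatenation of $k$ nonempty words $w_1,\dots,w_k$; set $F_{\emptyset}(M)=1$ and extend linearly. Then for every $M\in\mathbb{N}$ the map $w\mapsto F_w(M)$ is an algebra homomorphism $(\mathfrak{H}^1_z,\ast)\to(A,\cdot)$; in particular $F_{u\ast v}(M)=F_u(M)F_v(M)$ for all $u,v\in\mathfrak{H}^1_z$.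
   Context: $\mathfrak{H}^1_z=\mathbb{Q}\langle z_1,z_2,\dots\rangle$ is the noncommutative polynomial algebra on letters $z_j$ ($j\in\mathbb{N}$), i.e. the $\mathbb{Q}$-span of words in these letters, equipped with the stuffle product $\ast$ defined bilinearly by $1\ast w=w\ast1=w$ and $z_aw\ast z_bv=z_a(w\ast z_bv)+z_b(z_aw\ast v)+z_{a+b}(w\ast v)$ for $a,b\in\mathbb{N}$ and words $w,v$; this is a commutative $\mathbb{Q}$-algebra. Algebra homomorphisms send the empty word to $1$. *)

From HB Require Import structures.
From mathcomp Require Import all_boot all_order all_algebra.
Set Implicit Arguments. Unset Strict Implicit. Unset Printing Implicit Defensive.
Import Order.TTheory GRing.Theory Num.Theory.
Local Open Scope ring_scope.

(* Letters: the natural number [a] encodes the letter z_(a+1); thus the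
   letters z_1, z_2, ... of H^1_z are exactly the encodings 0, 1, 2, ... *)
Definition word := seq nat.

(* Sum of letters: z_(a+1) "+" z_(b+1) = z_(a+b+2), encoded by a+b+1. *)
Definition letter_add (a b : nat) : nat := (a + b).+1.

(* Stuffle product of two words, as a formal sum of words listed with
   multiplicity (all coefficients of u * v on words are natural numbers):
   z_a u * z_b v = z_a (u * z_b v) + z_b (z_a u * v) + z_(a+b) (u * v). *)
Fixpoint stuffle (u v : word) {struct u} : seq word :=
  match u with
  | [::] => [:: v]
  | a :: u' =>
    let fix st (v : word) : seq word :=
      match v with
      | [::] => [:: u]
      | b :: v' =>
          map (cons a) (stuffle u' v) ++ map (cons b) (st v')
          ++ map (cons (letter_add a b)) (stuffle u' v')
      end in st v
  end.

(* Elements of H^1_z are represented as formal Q-linear combinations of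
   words: [:: (c1, w1); ...; (cn, wn)] stands for c1 w1 + ... + cn wn. *)
Definition Hz := seq (rat * word).

Definition stuffleH (x y : Hz) : Hz :=
  flatten [seq [seq (p.1 * q.1, w) | w <- stuffle p.2 q.2] | p <- x, q <- y].

Definition linext (A : lalgType rat) (phi : word -> A) (x : Hz) : A :=
  \sum_(p <- x) p.1 *: phi p.2.

Definition stuffle_alg_hom (A : lalgType rat) (phi : word -> A) : Prop :=
  linext phi [:: (1, [::])] = 1 /\
  forall x y : Hz, linext phi (stuffleH x y) = linext phi x * linext phi y.

(* All decompositions of a word w as a concatenation w = w_1 ... w_k of
   k >= 0 nonempty words (k = 0 only for the empty word). *)
Fixpoint decomps (w : word) : seq (seq word) :=
  match w with
  | [::] => [:: [::]]
  | a :: w' =>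
      [seq [:: a] :: d | d <- decomps w'] ++
      [seq (a :: head [::] d) :: behead d | d <- decomps w' & d != [::]]
  end.

(* For d = [:: w_1; ...; w_k]:
   nested_sum f d lo M = \sum_(lo < m_1 < ... < m_k < M) f m_1 w_1 ... f m_k w_k. *)
Fixpoint nested_sum (A : lalgType rat) (f : nat -> word -> A) (d : seq word)
    (lo M : nat) : A :=
  match d with
  | [::] => 1
  | u :: d' => \sum_(lo.+1 <= m < M) f m u * nested_sum f d' m M
  end.

Definition Fsum (A : lalgType rat) (f : nat -> word -> A) (M : nat) (w : word) : A :=
  match w with
  | [::] => 1
  | _ => \sum_(d <- decomps w) nested_sum f d 0 M
  end.

(* The deconcatenation coproduct is compatible with the stuffle product, so
   the convolution phi * psi (w) = sum_(w = x y) phi(x) psi(y) of two stuffle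
   characters is again a character.  Splitting off the smallest summation
   index shows that the tail sums G_lo(w) = sum over lo < m_1 < ... < m_k < M
   satisfy G_lo = f(lo+1) * G_(lo+1), while G_lo is the counit once lo+1 >= M.
   Hence F(M) = G_0 = f(1) * ... * f(M-1) is a character. *)
From HB Require Import structures.
From mathcomp Require Import all_boot all_order all_algebra zify.
Import GRing.Theory.
Local Open Scope ring_scope.
Set Implicit Arguments. Unset Strict Implicit.

Lemma stuffle_nil_l v : stuffle [::] v = [:: v]. Proof. by []. Qed.

Lemma stuffle_nil_r u : stuffle u [::] = [:: u]. Proof. by case: u. Qed.

Lemma stuffle_cons a u b v :
  stuffle (a :: u) (b :: v) =
  map (cons a) (stuffle u (b :: v)) ++ map (cons b) (stuffle (a :: u) v)
  ++ map (cons (letter_add a b)) (stuffle u v).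
Proof. by []. Qed.

Arguments stuffle : simpl never.

Section Deconcatenation.
Variable V : nmodType.

Lemma big_stuffle_cons (G : word -> V) a u b v :
  \sum_(w <- stuffle (a :: u) (b :: v)) G w =
  \sum_(w <- stuffle u (b :: v)) G (a :: w) +
  \sum_(w <- stuffle (a :: u) v) G (b :: w) +
  \sum_(w <- stuffle u v) G (letter_add a b :: w).
Proof. by rewrite stuffle_cons !big_cat !big_map; exact: addrA. Qed.

Definition deconc (F : word -> word -> V) (w : word) : V :=
  \sum_(i < (size w).+1) F (take i w) (drop i w).

Lemma deconc_cons F c w :
  deconc F (c :: w) = F [::] (c :: w) + deconc (fun x => F (c :: x)) w.
Proof. by rewrite /deconc big_ord_recl. Qed.

Definition stuffle_deconc (F : word -> word -> V) (u v : word) : V :=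
  \sum_(i < (size u).+1) \sum_(j < (size v).+1)
    \sum_(x <- stuffle (take i u) (take j v))
    \sum_(y <- stuffle (drop i u) (drop j v)) F x y.

Lemma stuffle_deconc_nil_l F v : stuffle_deconc F [::] v = deconc F v.
Proof.
rewrite /stuffle_deconc big_ord_recl big_ord0 addr0.
by apply: eq_bigr => j _; rewrite !stuffle_nil_l !big_seq1.
Qed.

Lemma stuffle_deconc_nil_r F u : stuffle_deconc F u [::] = deconc F u.
Proof.
apply: eq_bigr => i _; rewrite big_ord_recl big_ord0 addr0.
by rewrite /= !stuffle_nil_r !big_seq1.
Qed.

Lemma stuffle_deconc_cons_r F u b v :
  stuffle_deconc F u (b :: v) =
  \sum_(i < (size u).+1) \sum_(y <- stuffle (drop i u) (b :: v)) F (take i u) y +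
  \sum_(i < (size u).+1) \sum_(j < (size v).+1)
    \sum_(x <- stuffle (take i u) (b :: take j v))
    \sum_(y <- stuffle (drop i u) (drop j v)) F x y.
Proof.
rewrite -big_split; apply: eq_bigr => i _.
by rewrite big_ord_recl /= stuffle_nil_r big_seq1.
Qed.

Lemma stuffle_deconc_cons_l F a u v :
  stuffle_deconc F (a :: u) v =
  \sum_(j < (size v).+1) \sum_(y <- stuffle (a :: u) (drop j v)) F (take j v) y +
  \sum_(i < (size u).+1) \sum_(j < (size v).+1)
    \sum_(x <- stuffle (a :: take i u) (take j v))
    \sum_(y <- stuffle (drop i u) (drop j v)) F x y.
Proof.
rewrite /stuffle_deconc big_ord_recl; congr (_ + _).
by apply: eq_bigr => j _; rewrite /= stuffle_nil_l big_seq1.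
Qed.

(* Split the cuts (i, j) of (a :: u, b :: v) according to whether i and j
   vanish; when neither does, the first letters of both left factors are
   stuffled, producing the three shifted terms. *)
Lemma stuffle_deconc_cons F a u b v :
  stuffle_deconc F (a :: u) (b :: v) =
  \sum_(w <- stuffle (a :: u) (b :: v)) F [::] w +
  stuffle_deconc (fun x => F (a :: x)) u (b :: v) +
  stuffle_deconc (fun x => F (b :: x)) (a :: u) v +
  stuffle_deconc (fun x => F (letter_add a b :: x)) u v.
Proof.
rewrite {1}/stuffle_deconc /= big_ord_recl /= (big_ord_recl (size v).+1) /=.
under [X in _ + X]eq_bigr => i _ do rewrite big_ord_recl /=.
rewrite big_split /= stuffle_nil_l big_seq1.
have top_row : \sum_(j < (size v).+1)
    \sum_(x <- stuffle [::] (b :: take j v))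
    \sum_(y <- stuffle (a :: u) (drop j v)) F x y =
    \sum_(j < (size v).+1) \sum_(y <- stuffle (a :: u) (drop j v))
      F (b :: take j v) y.
  by apply: eq_bigr => j _; rewrite stuffle_nil_l big_seq1.
have left_column : \sum_(i < (size u).+1)
    \sum_(x <- stuffle (a :: take i u) [::])
    \sum_(y <- stuffle (drop i u) (b :: v)) F x y =
    \sum_(i < (size u).+1) \sum_(y <- stuffle (drop i u) (b :: v))
      F (a :: take i u) y.
  by apply: eq_bigr => i _; rewrite stuffle_nil_r big_seq1.
rewrite top_row left_column stuffle_deconc_cons_r stuffle_deconc_cons_l.
under [X in _ + (_ + X) = _]eq_bigr => i _.
  under eq_bigr => j _ do rewrite big_stuffle_cons.
  rewrite !big_split /=.
  over.
rewrite !big_split /= -!addrA; congr (_ + _).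
by rewrite addrCA; congr (_ + _); exact: addrCA.
Qed.

Lemma big_stuffle_deconc F u v :
  \sum_(w <- stuffle u v) deconc F w = stuffle_deconc F u v.
Proof.
elim: u v F => [|a u IHu] v F.
  by rewrite stuffle_nil_l big_seq1 stuffle_deconc_nil_l.
elim: v F => [|b v IHv] F.
  by rewrite stuffle_nil_r big_seq1 stuffle_deconc_nil_r.
rewrite stuffle_deconc_cons -IHu -IHv -IHu big_stuffle_cons.
under eq_bigr do rewrite deconc_cons.
under [X in _ + X + _]eq_bigr do rewrite deconc_cons.
under [X in _ + X]eq_bigr do rewrite deconc_cons.
rewrite !big_split /= (big_stuffle_cons (F [::])).
by rewrite [X in X + _ = _]addrACA addrACA !addrA.
Qed.

End Deconcatenation.

Section StuffleCharacters.
Variable R : comPzRingType.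

Definition stuffle_char (phi : word -> R) : Prop :=
  phi [::] = 1 /\ forall u v, \sum_(w <- stuffle u v) phi w = phi u * phi v.

Lemma eq_stuffle_char phi psi :
  phi =1 psi -> stuffle_char phi -> stuffle_char psi.
Proof.
move=> E [phi0 phiM]; split; first by rewrite -E.
by move=> u v; rewrite -!E -phiM; apply: eq_bigr => w _; rewrite E.
Qed.

Definition counit (w : word) : R := (w == [::])%:R.

Lemma stuffle_char_counit : stuffle_char counit.
Proof.
split=> // -[|a u] [|b v].
- by rewrite stuffle_nil_l big_seq1 mul1r.
- by rewrite stuffle_nil_l big_seq1 mul1r.
- by rewrite stuffle_nil_r big_seq1 mulr1.
by rewrite big_stuffle_cons /counit /= mul0r !big1 ?addr0.
Qed.

Definition convolution (phi psi : word -> R) : word -> R :=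
  deconc (fun x y => phi x * psi y).

Lemma stuffle_char_convolution phi psi :
  stuffle_char phi -> stuffle_char psi -> stuffle_char (convolution phi psi).
Proof.
move=> [phi0 phiM] [psi0 psiM]; split.
  by rewrite /convolution /deconc big_ord1 /= phi0 psi0 mulr1.
move=> u v; rewrite big_stuffle_deconc big_distrl /=.
apply: eq_bigr => i _; rewrite big_distrr /=; apply: eq_bigr => j _.
under eq_bigr do rewrite -big_distrr /=.
by rewrite -big_distrl /= phiM psiM mulrACA.
Qed.

End StuffleCharacters.

Section TailSums.
Variable A : comAlgType rat.

Lemma linext_stuffleH (phi : word -> A) x y :
  linext phi (stuffleH x y) =
  \sum_(p <- x) \sum_(q <- y) (p.1 * q.1) *: \sum_(w <- stuffle p.2 q.2) phi w.
Proof.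
rewrite /linext /stuffleH big_flatten big_allpairs_dep /=.
by apply: eq_bigr => p _; apply: eq_bigr => q _; rewrite big_map scaler_sumr.
Qed.

Lemma stuffle_alg_homP (phi : word -> A) :
  stuffle_alg_hom phi <-> stuffle_char phi.
Proof.
have linext1 : linext phi [:: (1, [::])] = phi [::].
  by rewrite /linext big_seq1 scale1r.
split=> [[phi1 phiM] | [phi1 phiM]]; split.
- by rewrite -linext1.
- move=> u v; have := phiM [:: (1, u)] [:: (1, v)].
  by rewrite linext_stuffleH /linext !big_seq1 /= mulr1 !scale1r.
- by rewrite linext1.
move=> x y; rewrite linext_stuffleH /linext big_distrl /=.
apply: eq_bigr => p _; rewrite big_distrr /=; apply: eq_bigr => q _.
by rewrite phiM -scalerAl -scalerAr scalerA.
Qed.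

Lemma big_decomps (H : word -> seq word -> A) w :
  \sum_(d <- decomps w) (if d is u :: d' then H u d' else 0) =
  \sum_(i < size w) \sum_(d <- decomps (drop i.+1 w)) H (take i.+1 w) d.
Proof.
elim: w H => [|a w IH] H; first by rewrite big_seq1 big_ord0.
rewrite /= big_cat !big_map big_ord_recl /= drop0 take0; congr (_ + _).
rewrite big_filter big_mkcond /= -(IH (fun u d => H (a :: u) d)).
by apply: eq_bigr => -[|u d] _.
Qed.

Variables (f : nat -> word -> A) (M : nat).

Definition tail_sum (lo : nat) (w : word) : A :=
  \sum_(d <- decomps w) nested_sum f d lo M.

Lemma Fsum_tail_sum : Fsum f M =1 tail_sum 0.
Proof. by case=> [|a w]; rewrite /tail_sum //= big_seq1. Qed.

Lemma tail_sum_counit lo : (M <= lo.+1)%N -> tail_sum lo =1 counit A.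
Proof.
move=> le_M_lo [|a w]; first by rewrite /tail_sum big_seq1.
rewrite /tail_sum /= big_cat !big_map /= !big1 ?addr0 // => d _.
all: by rewrite big_geq.
Qed.

Lemma nested_sum_first_index d lo : (lo.+1 < M)%N ->
  nested_sum f d lo M =
  nested_sum f d lo.+1 M +
  (if d is u :: d' then f lo.+1 u * nested_sum f d' lo.+1 M else 0).
Proof.
move=> lt_lo_M; case: d => [|u d] /=; first by rewrite addr0.
by rewrite (big_ltn lt_lo_M) addrC.
Qed.

Lemma tail_sum_convolution lo : (lo.+1 < M)%N -> f lo.+1 [::] = 1 ->
  tail_sum lo =1 convolution (f lo.+1) (tail_sum lo.+1).
Proof.
move=> lt_lo_M f1 w; rewrite /tail_sum.
under eq_bigr do rewrite (nested_sum_first_index _ lt_lo_M).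
rewrite big_split /= big_decomps /convolution /deconc big_ord_recl /=.
rewrite take0 drop0 f1 mul1r.
by congr (_ + _); apply: eq_bigr => i _; rewrite mulr_sumr.
Qed.

Lemma stuffle_char_tail_sum :
  (forall m, (0 < m)%N -> stuffle_char (f m)) ->
  forall lo, stuffle_char (tail_sum lo).
Proof.
move=> f_char lo; have [k] := ubnP (M - lo); elim: k lo => // k IH lo lt_k.
have [le_M_lo | lt_lo_M] := leqP M lo.+1.
  apply: (eq_stuffle_char _ (stuffle_char_counit A)) => w.
  by rewrite tail_sum_counit.
have [f1 _] := f_char lo.+1 isT.
have char_tail : stuffle_char (tail_sum lo.+1) by apply: IH; lia.
have char_conv := stuffle_char_convolution (f_char lo.+1 isT) char_tail.
by apply: (eq_stuffle_char _ char_conv) => w; rewrite tail_sum_convolution.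
Qed.

End TailSums.

Theorem proposition6p8 (A : comAlgType rat) (f : nat -> word -> A) :
  (forall m : nat, (0 < m)%N -> stuffle_alg_hom (f m)) ->
  forall M : nat, stuffle_alg_hom (Fsum f M).
Proof.
move=> f_hom M; apply/stuffle_alg_homP.
have f_char m : (0 < m)%N -> stuffle_char (f m) by move/f_hom/stuffle_alg_homP.
apply: (eq_stuffle_char _ (stuffle_char_tail_sum M f_char 0)) => w.
by rewrite Fsum_tail_sum.
Qed.
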